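(* Let $\mathcal{A}=(A,B,s,t,\Delta)$ be a left multiplier bialgebroid and $J\colon A\to A^{\mathrm{op}}$ the canonical linear anti-isomorphism. Regard $J\circ s$ as an anti-homomorphism and $J\circ t$ as a homomorphism from $B$ to $M(A^{\mathrm{op}})\subseteq R(A^{\mathrm{op}})$ (written simply $s$, $t$). Then $J\otimes J$ induces a linear isomorphism from ${}_BA\otimes A^B$ onto ${}^B(A^{\mathrm{op}})\otimes(A^{\mathrm{op}})_B$, the quotient of $A^{\mathrm{op}}\otimes A^{\mathrm{op}}$ by the span of $J(s(x)a)\otimes J(b)-J(a)\otimes J(t(x)b)$. Define $\Delta^{\mathrm{op}}$ by $(J(b)\otimes J(c))\Delta^{\mathrm{op}}(J(a))=(J\otimes J)(\Delta(a)(b\otimes c))$. Then $\mathcal{A}^{\mathrm{op}}=(A^{\mathrm{op}},B,t,s,\Delta^{\mathrm{op}})$ is a right multiplier bialgebroid, whose associated maps are $\widetilde{{}_\lambda T}^{\mathrm{op}}=(J\otimes J)\circ\widetilde{T_\lambda}\circ(J\otimes J)^{-1}$ and $\widetilde{{}_\rho T}^{\mathrm{op}}=(J\otimes J)\circ\widetilde{T_\rho}\circ(J\otimes J)^{-1}$. Conversely, for every right multiplier bialgebroid $\mathcal{A}'$ there exists a unique left multiplier bialgebroid $\mathcal{A}$ with $\mathcal{A}'=\mathcal{A}^{\mathrm{op}}$.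
   Context: All algebras are associative complex algebras, not necessarily unital. For $A$ with $A_A$ non-degenerate, $L(A)=\mathrm{End}(A_A)$ and $M(A)=\{T\in L(A):aT\in A\}$. For $A$ with ${}_AA$ non-degenerate, $R(A)$ is the algebra of left $A$-module endomorphisms of $A$ with reversed composition, written on the right ($a\mapsto aT$), containing $A$ via right multiplication, and $M(A)=\{T\in R(A):TA\subseteq A\}$; $J$ identifies $M(A)^{\mathrm{op}}$ with $M(A^{\mathrm{op}})$. Left multiplier bialgebroid $(A,B,s,t,\Delta)$: (i) $A_A$ non-degenerate and idempotent; (ii) $s\colon B\to M(A)$ homomorphism, $t$ anti-homomorphism, commuting images, injective, $s(B)A=A=t(B)A$; ${}_BA\otimes A^B$ (quotient of $A\otimes A$ by the span of $s(x)a\otimes b-a\otimes t(x)b$) non-degenerate as right module over $A\otimes1$ and $1\otimes A$; (iii) $\Delta$ a homomorphism into endomorphisms $T$ of ${}_BA\otimes A^B$ for which $T(a\otimes1),T(1\otimes b)$ exist with $T(a\otimes b)=T(a\otimes1)(1\otimes b)=T(1\otimes b)(a\otimes1)$; (iv) $\Delta(s(x)t(y)as(x')t(y'))=(t(y)\otimes s(x))\Delta(a)(t(y')\otimes s(x'))$; (v) if $\Delta(b)(1\otimes c)=\sum p_i\otimes q_i$, $\Delta(b)(a\otimes1)=\sum u_j\otimes v_j$ then $\sum\Delta(p_i)(a\otimes1)\otimes q_i=\sum u_j\otimes\Delta(v_j)(1\otimes c)$ in $A^{\otimes3}$ modulo the span of $s(x)a\otimes b\otimes c-a\otimes t(x)b\otimes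 c$, $a\otimes s(x)b\otimes c-a\otimes b\otimes t(x)c$. Associated maps $\widetilde{T_\lambda}(a\otimes b)=\Delta(b)(a\otimes1)$, $\widetilde{T_\rho}(a\otimes b)=\Delta(a)(1\otimes b)$. Right multiplier bialgebroid $(A,C,s,t,\Delta)$: (i) ${}_AA$ non-degenerate and idempotent; (ii) $s\colon C\to M(A)\subseteq R(A)$ homomorphism, $t\colon C\to M(A)$ anti-homomorphism, commuting images, injective, $As(C)=A=At(C)$; ${}^CA\otimes A_C$, the quotient of $A\otimes A$ by the span of $at(y)\otimes b-a\otimes bs(y)$, non-degenerate as a left module over $A\otimes1$ and $1\otimes A$; (iii) $\Delta$ a homomorphism into the algebra of maps $w\mapsto wT$ on ${}^CA\otimes A_C$ (composition reversed) for which $(a\otimes1)T,(1\otimes b)T$ exist with $(a\otimes b)T=(1\otimes b)((a\otimes1)T)=(a\otimes1)((1\otimes b)T)$; (iv) $\Delta(s(y)t(x)as(y')t(x'))=(s(y)\otimes t(x))\Delta(a)(s(y')\otimes t(x'))$; (v) $(a\otimes1\otimes1)((\Delta\otimes\iota)((1\otimes c)\Delta(b)))=(1\otimes1\otimes c)((\iota\otimes\Delta)((a\otimes1)\Delta(b)))$, interpreted analogously. Associated maps $\widetilde{{}_\lambda T}(a\otimes b)=(a\otimes1)\Delta(b)$, $\widetilde{{}_\rho T}(a\otimes b)=(1\otimes b)\Delta(a)$. *)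

From Stdlib Require List.
From HB Require Import structures.
From mathcomp Require Import all_boot all_algebra.
From mathcomp Require Import reals.
From mathcomp.real_closed Require Import complex.

Set Implicit Arguments.
Unset Strict Implicit.
Unset Printing Implicit Defensive.

Import GRing.Theory.
Local Open Scope ring_scope.

Record nuAlg (K : fieldType) := NuAlg {
  nacar :> lmodType K;
  namul : nacar -> nacar -> nacar;
  namulA : forall a b c, namul a (namul b c) = namul (namul a b) c;
  namulDl : forall (k : K) a a' b,
      namul (k *: a + a') b = k *: namul a b + namul a' b;
  namulDr : forall (k : K) a b b',
      namul a (k *: b + b') = k *: namul a b + namul a b' }.

Arguments namul {K} n _ _.
Arguments namulA {K} n _ _ _.
Arguments namulDl {K} n _ _ _ _.
Arguments namulDr {K} n _ _ _ _.

Definition opAlg (K : fieldType) (A : nuAlg K) : nuAlg K :=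
  @NuAlg K (nacar A) (fun a b => namul A b a)
    (fun a b c => esym (namulA A c b a))
    (fun k a a' b => namulDr A k b a a')
    (fun k a b b' => namulDl A k b b' a).

Definition opJ (K : fieldType) (A : nuAlg K) : A -> opAlg A := fun a => a.
Definition opJinv (K : fieldType) (A : nuAlg K) : opAlg A -> A := fun a => a.

Definition linfun (K : fieldType) (V W : lmodType K) (T : V -> W) : Prop :=
  forall (k : K) a a', T (k *: a + a') = k *: T a + T a'.

(* T in L(A) = End(A_A), maps written on the left: T(ab) = T(a) b. *)
Definition inLA (K : fieldType) (A : nuAlg K) (T : A -> A) : Prop :=
  linfun T /\ forall a b, T (namul A a b) = namul A (T a) b.

(* T in M(A) subset L(A): for every a, aT is (left multiplication by) an
   element c of A, i.e. a (T b) = c b for all b. *)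
Definition inML (K : fieldType) (A : nuAlg K) (T : A -> A) : Prop :=
  inLA T /\ forall a, exists c, forall b, namul A a (T b) = namul A c b.

(* T in R(A) = End(_A A), maps written on the right (a |-> aT is the raw
   function T): (ab)T = a(bT). *)
Definition inRA (K : fieldType) (A : nuAlg K) (T : A -> A) : Prop :=
  linfun T /\ forall a b, T (namul A a b) = namul A a (T b).

(* T in M(A) subset R(A): for every a, Ta is an element c of A, i.e.
   (bT) a = b c for all b. *)
Definition inMR (K : fieldType) (A : nuAlg K) (T : A -> A) : Prop :=
  inRA T /\ forall a, exists c, forall b, namul A (T b) a = namul A b c.

Definition nondeg_right (K : fieldType) (A : nuAlg K) : Prop :=
  forall a : A, (forall b, namul A a b = 0) -> a = 0.

Definition nondeg_left (K : fieldType) (A : nuAlg K) : Prop :=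
  forall b : A, (forall a, namul A a b = 0) -> b = 0.

Definition inspan (K : fieldType) (V : lmodType K) (P : V -> Prop) (v : V)
  : Prop :=
  exists l : seq (K * V),
    (forall p, List.In p l -> P p.2) /\ v = \sum_(p <- l) p.1 *: p.2.

Definition idempotent_alg (K : fieldType) (A : nuAlg K) : Prop :=
  forall a : A, inspan (fun c => exists x y, c = namul A x y) a.

(* span { f x a : x in B, a in A } = A  (this is s(B)A = A for left
   multipliers, and As(C) = A for right multipliers, as a |-> a s(y) is the
   raw function s y). *)
Definition spans_all (K : fieldType) (A B : nuAlg K) (f : B -> A -> A)
  : Prop :=
  forall a : A, inspan (fun c => exists x a', c = f x a') a.

(* A list l = [:: (a1,b1); ...] represents sum_i a_i (x) b_i.               *)

Definition bilin (K : fieldType) (V U : lmodType K) (phi : V -> V -> U)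
  : Prop :=
  (forall (k : K) a a' b, phi (k *: a + a') b = k *: phi a b + phi a' b) /\
  (forall (k : K) a b b', phi a (k *: b + b') = k *: phi a b + phi a b').

Definition trilin (K : fieldType) (V U : lmodType K) (phi : V -> V -> V -> U)
  : Prop :=
  (forall (k : K) a a' b c,
      phi (k *: a + a') b c = k *: phi a b c + phi a' b c) /\
  (forall (k : K) a b b' c,
      phi a (k *: b + b') c = k *: phi a b c + phi a b' c) /\
  (forall (k : K) a b c c',
      phi a b (k *: c + c') = k *: phi a b c + phi a b c').

(* Equality in the quotient of A (x) A by the span of
   f(x)a (x) b - a (x) g(x)b   (x in B), defined by the universal property
   of this quotient: every bilinear map killing the relations agrees on l1
   and l2.  For a left bialgebroid (f,g) = (s,t) gives _B A (x) A^B; for a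
   right one (f,g) = (t,s) gives ^C A (x) A_C. *)
Definition eqQ (K : fieldType) (A B : nuAlg K) (f g : B -> A -> A)
  (l1 l2 : seq (A * A)%type) : Prop :=
  forall (U : lmodType K) (phi : A -> A -> U), bilin phi ->
    (forall x a b, phi (f x a) b = phi a (g x b)) ->
    \sum_(p <- l1) phi p.1 p.2 = \sum_(p <- l2) phi p.1 p.2.

Definition eqQ3 (K : fieldType) (A B : nuAlg K) (f g : B -> A -> A)
  (l1 l2 : seq (A * A * A)%type) : Prop :=
  forall (U : lmodType K) (phi : A -> A -> A -> U), trilin phi ->
    (forall x a b c, phi (f x a) b c = phi a (g x b) c) ->
    (forall x a b c, phi a (f x b) c = phi a b (g x c)) ->
    \sum_(p <- l1) phi p.1.1 p.1.2 p.2 = \sum_(p <- l2) phi p.1.1 p.1.2 p.2.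

Definition tscale (K : fieldType) (A : nuAlg K) (k : K) (l : seq (A * A)%type)
  : seq (A * A)%type := [seq (k *: p.1, p.2) | p <- l].

Definition rmul1 (K : fieldType) (A : nuAlg K) (l : seq (A * A)%type) (c : A)
  : seq (A * A)%type := [seq (namul A p.1 c, p.2) | p <- l].
Definition rmul2 (K : fieldType) (A : nuAlg K) (l : seq (A * A)%type) (d : A)
  : seq (A * A)%type := [seq (p.1, namul A p.2 d) | p <- l].

Definition lmul1 (K : fieldType) (A : nuAlg K) (c : A) (l : seq (A * A)%type)
  : seq (A * A)%type := [seq (namul A c p.1, p.2) | p <- l].
Definition lmul2 (K : fieldType) (A : nuAlg K) (d : A) (l : seq (A * A)%type)
  : seq (A * A)%type := [seq (p.1, namul A d p.2) | p <- l].

(* P is an equivalence class for E (elements of the quotient are such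
   classes of representatives). *)
Definition isClass (T : Type) (E : T -> T -> Prop) (P : T -> Prop) : Prop :=
  (exists l, P l) /\ forall l1 l2, P l1 -> (P l2 <-> E l1 l2).

(* A comultiplication is encoded by D : A -> A -> A -> (class of tensors):
   D a b c is the element Delta(a)(b (x) c) (left case) resp.
   (b (x) c)Delta(a) (right case) of the balanced tensor product.
   Dapp E D a l w : w represents the image of (the class of) l under the
   endomorphism determined by D a (extended additively). *)
Fixpoint Dapp (K : fieldType) (A : nuAlg K)
  (E : seq (A * A)%type -> seq (A * A)%type -> Prop)
  (D : A -> A -> A -> seq (A * A)%type -> Prop) (a : A)
  (l w : seq (A * A)%type) {struct l} : Prop :=
  match l with
  | [::] => E w [::]
  | p :: l' => exists w1 w2,
      D a p.1 p.2 w1 /\ Dapp E D a l' w2 /\ E w (w1 ++ w2)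
  end.

Record isLMBA (K : fieldType) (A B : nuAlg K) (s t : B -> A -> A)
  (D : A -> A -> A -> seq (A * A)%type -> Prop) : Prop := {
  lmba_nondeg : nondeg_right A;
  lmba_idem : idempotent_alg A;
  lmba_s_lin : forall (k : K) x y a, s (k *: x + y) a = k *: s x a + s y a;
  lmba_s_mul : forall x y a, s (namul B x y) a = s x (s y a);
  lmba_t_lin : forall (k : K) x y a, t (k *: x + y) a = k *: t x a + t y a;
  lmba_t_mul : forall x y a, t (namul B x y) a = t y (t x a);
  lmba_s_M : forall x, inML (s x);
  lmba_t_M : forall x, inML (t x);
  lmba_st_comm : forall x y a, s x (t y a) = t y (s x a);
  lmba_s_inj : forall x y, (forall a, s x a = s y a) -> x = y;
  lmba_t_inj : forall x y, (forall a, t x a = t y a) -> x = y;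
  lmba_s_span : spans_all s;
  lmba_t_span : spans_all t;
  lmba_Q_nondeg1 : forall l, (forall c, eqQ s t (rmul1 l c) [::]) ->
                             eqQ s t l [::];
  lmba_Q_nondeg2 : forall l, (forall d, eqQ s t (rmul2 l d) [::]) ->
                             eqQ s t l [::];
  lmba_D_class : forall a b c, isClass (eqQ s t) (D a b c);
  lmba_D_lin1 : forall a (k : K) b b' c w1 w2, D a b c w1 -> D a b' c w2 ->
                  D a (k *: b + b') c (tscale k w1 ++ w2);
  lmba_D_lin2 : forall a (k : K) b c c' w1 w2, D a b c w1 -> D a b c' w2 ->
                  D a b (k *: c + c') (tscale k w1 ++ w2);
  lmba_D_bal : forall a x b c w, D a (s x b) c w <-> D a b (t x c) w;
  lmba_D_linA : forall (k : K) a a' b c w1 w2, D a b c w1 -> D a' b c w2 ->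
                  D (k *: a + a') b c (tscale k w1 ++ w2);
  lmba_D_mul : forall a a' b c w v, D a' b c w -> Dapp (eqQ s t) D a w v ->
                  D (namul A a a') b c v;
  lmba_D_ex1 : forall a c, exists w, forall d, D a c d (rmul2 w d);
  lmba_D_ex2 : forall a d, exists w, forall c, D a c d (rmul1 w c);
  (* (iv) Delta(s(x)t(y) a s(x')t(y')) = (t(y)(x)s(x)) Delta(a) (t(y')(x)s(x')),
     where c1 = a s(x') and c2 = c1 t(y') *)
  lmba_D_mod : forall x y x' y' a c1 c2 b c w,
      (forall e, namul A c1 e = namul A a (s x' e)) ->
      (forall e, namul A c2 e = namul A c1 (t y' e)) ->
      D a (t y' b) (s x' c) w ->
      D (s x (t y c2)) b c [seq (t y p.1, s x p.2) | p <- w];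
  (* (v) coassociativity:
     ps = Delta(b)(1 (x) c), us = Delta(b)(a (x) 1),
     ws_i = Delta(p_i)(a (x) 1), zs_j = Delta(v_j)(1 (x) c). *)
  lmba_D_coass : forall a b c (ps us : seq (A * A)%type)
      (ws zs : seq (seq (A * A)%type)),
      (forall a', D b a' c (rmul1 ps a')) ->
      (forall d, D b a d (rmul2 us d)) ->
      size ws = size ps ->
      (forall pw, List.In pw (zip ps ws) ->
         forall d, D pw.1.1 a d (rmul2 pw.2 d)) ->
      size zs = size us ->
      (forall uz, List.In uz (zip us zs) ->
         forall c', D uz.1.2 c' c (rmul1 uz.2 c')) ->
      eqQ3 s t
        (flatten [seq [seq (q.1, q.2, pw.1.2) | q <- pw.2] | pw <- zip ps ws])
        (flatten [seq [seq (uz.1.1, q.1, q.2) | q <- uz.2] | uz <- zip us zs])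
}.

(* Right multiplier bialgebroids (A, C, s, t, Delta).  Elements of R(A) are  *)
(* raw functions T with a |-> aT; composition in R(A) is reversed.           *)

Record isRMBA (K : fieldType) (A C : nuAlg K) (s t : C -> A -> A)
  (D : A -> A -> A -> seq (A * A)%type -> Prop) : Prop := {
  rmba_nondeg : nondeg_left A;
  rmba_idem : idempotent_alg A;
  rmba_s_lin : forall (k : K) x y a, s (k *: x + y) a = k *: s x a + s y a;
  rmba_s_mul : forall x y a, s (namul C x y) a = s y (s x a);
  rmba_t_lin : forall (k : K) x y a, t (k *: x + y) a = k *: t x a + t y a;
  rmba_t_mul : forall x y a, t (namul C x y) a = t x (t y a);
  rmba_s_M : forall x, inMR (s x);
  rmba_t_M : forall x, inMR (t x);
  rmba_st_comm : forall x y a, s x (t y a) = t y (s x a);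
  rmba_s_inj : forall x y, (forall a, s x a = s y a) -> x = y;
  rmba_t_inj : forall x y, (forall a, t x a = t y a) -> x = y;
  rmba_s_span : spans_all s;
  rmba_t_span : spans_all t;
  rmba_Q_nondeg1 : forall l, (forall c, eqQ t s (lmul1 c l) [::]) ->
                             eqQ t s l [::];
  rmba_Q_nondeg2 : forall l, (forall d, eqQ t s (lmul2 d l) [::]) ->
                             eqQ t s l [::];
  rmba_D_class : forall a b c, isClass (eqQ t s) (D a b c);
  rmba_D_lin1 : forall a (k : K) b b' c w1 w2, D a b c w1 -> D a b' c w2 ->
                  D a (k *: b + b') c (tscale k w1 ++ w2);
  rmba_D_lin2 : forall a (k : K) b c c' w1 w2, D a b c w1 -> D a b c' w2 ->
                  D a b (k *: c + c') (tscale k w1 ++ w2);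
  rmba_D_bal : forall a y b c w, D a (t y b) c w <-> D a b (s y c) w;
  rmba_D_linA : forall (k : K) a a' b c w1 w2, D a b c w1 -> D a' b c w2 ->
                  D (k *: a + a') b c (tscale k w1 ++ w2);
  rmba_D_mul : forall a a' b c w v, D a b c w -> Dapp (eqQ t s) D a' w v ->
                  D (namul A a a') b c v;
  rmba_D_ex1 : forall a c, exists w, forall d, D a c d (lmul2 d w);
  rmba_D_ex2 : forall a d, exists w, forall c, D a c d (lmul1 c w);
  (* (iv) Delta(s(y)t(x) a s(y')t(x')) = (s(y)(x)t(x)) Delta(a) (s(y')(x)t(x')),
     where c1 = t(x) a and c2 = s(y) c1 *)
  rmba_D_mod : forall y x y' x' a c1 c2 b c w,
      (forall e, namul A (t x e) a = namul A e c1) ->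
      (forall e, namul A (s y e) c1 = namul A e c2) ->
      D a (s y b) (t x c) w ->
      D (t x' (s y' c2)) b c [seq (s y' p.1, t x' p.2) | p <- w];
  (* (v) coassociativity:
     ps = (1 (x) c)Delta(b), us = (a (x) 1)Delta(b),
     ws_i = (a (x) 1)Delta(p_i), zs_j = (1 (x) c)Delta(v_j). *)
  rmba_D_coass : forall a b c (ps us : seq (A * A)%type)
      (ws zs : seq (seq (A * A)%type)),
      (forall a', D b a' c (lmul1 a' ps)) ->
      (forall d, D b a d (lmul2 d us)) ->
      size ws = size ps ->
      (forall pw, List.In pw (zip ps ws) ->
         forall d, D pw.1.1 a d (lmul2 d pw.2)) ->
      size zs = size us ->
      (forall uz, List.In uz (zip us zs) ->
         forall c', D uz.1.2 c' c (lmul1 c' uz.2)) ->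
      eqQ3 t s
        (flatten [seq [seq (q.1, q.2, pw.1.2) | q <- pw.2] | pw <- zip ps ws])
        (flatten [seq [seq (uz.1.1, q.1, q.2) | q <- uz.2] | uz <- zip us zs])
}.

Record mbdata (K : fieldType) := MBData {
  mA : nuAlg K;
  mB : nuAlg K;
  msrc : mB -> mA -> mA;
  mtgt : mB -> mA -> mA;
  mcop : mA -> mA -> mA -> seq (mA * mA)%type -> Prop }.

Arguments mA {K} m.
Arguments mB {K} m.
Arguments msrc {K} m _ _.
Arguments mtgt {K} m _ _.
Arguments mcop {K} m _ _ _ _.

Definition isLMBAd (K : fieldType) (d : mbdata K) : Prop :=
  isLMBA (msrc d) (mtgt d) (mcop d).
Definition isRMBAd (K : fieldType) (d : mbdata K) : Prop :=
  isRMBA (msrc d) (mtgt d) (mcop d).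

Definition JJ (K : fieldType) (A : nuAlg K) (l : seq (A * A)%type)
  : seq (opAlg A * opAlg A)%type := [seq (opJ p.1, opJ p.2) | p <- l].
Definition JJinv (K : fieldType) (A : nuAlg K)
  (l : seq (opAlg A * opAlg A)%type) : seq (A * A)%type :=
  [seq (opJinv p.1, opJinv p.2) | p <- l].

(* A^op = (A^op, B, J o t, J o s, Delta^op), with
   (J(b) (x) J(c)) Delta^op(J(a)) = (J (x) J)(Delta(a)(b (x) c)). *)
Definition opData (K : fieldType) (d : mbdata K) : mbdata K :=
  @MBData K (opAlg (mA d)) (mB d)
    (fun x a => opJ (mtgt d x (opJinv a)))
    (fun x a => opJ (msrc d x (opJinv a)))
    (fun a b c w => mcop d (opJinv a) (opJinv b) (opJinv c) (JJinv w)).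

(* Associated maps, as relations "w represents the value at a (x) b". *)
(* left:  T_lambda(a (x) b) = Delta(b)(a (x) 1),  T_rho(a (x) b) = Delta(a)(1 (x) b) *)
Definition Tlam (K : fieldType) (A : nuAlg K)
  (D : A -> A -> A -> seq (A * A)%type -> Prop) (a b : A) w : Prop :=
  forall d, D b a d (rmul2 w d).
Definition Trho (K : fieldType) (A : nuAlg K)
  (D : A -> A -> A -> seq (A * A)%type -> Prop) (a b : A) w : Prop :=
  forall c, D a c b (rmul1 w c).
(* right: _lambda T(a (x) b) = (a (x) 1)Delta(b), _rho T(a (x) b) = (1 (x) b)Delta(a) *)
Definition lamT (K : fieldType) (A : nuAlg K)
  (D : A -> A -> A -> seq (A * A)%type -> Prop) (a b : A) w : Prop :=
  forall d, D b a d (lmul2 d w).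
Definition rhoT (K : fieldType) (A : nuAlg K)
  (D : A -> A -> A -> seq (A * A)%type -> Prop) (a b : A) w : Prop :=
  forall c, D a c b (lmul1 c w).

From HB Require Import structures.
From mathcomp Require Import all_boot all_algebra.
From mathcomp Require Import reals.
From mathcomp.real_closed Require Import complex.
From Stdlib Require Import ProofIrrelevance FunctionalExtensionality.

(* J is the identity on the underlying vector space and only reverses the
   product.  Hence J (x) J identifies the relations defining _B A (x) A^B with
   those defining ^B(A^op) (x) (A^op)_B, Delta^op is Delta itself, and each
   axiom of a left multiplier bialgebroid, read in A^op with s and t
   exchanged, is the corresponding axiom of a right multiplier bialgebroid,
   and conversely.  As taking opposites is an involution, the left multiplier
   bialgebroid with opposite A' is forced to be A'^op. *)

Set Implicit Arguments.
Unset Strict Implicit.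
Unset Printing Implicit Defensive.

Import GRing.Theory.
Local Open Scope ring_scope.

Section Opposite.
Variable K : fieldType.

Lemma JJE (A : nuAlg K) (w : seq (A * A)%type) : JJ w = w.
Proof. by elim: w => [|[a b] w /= ->]. Qed.

Lemma JJinvE (A : nuAlg K) (w : seq (opAlg A * opAlg A)%type) : JJinv w = w.
Proof. by elim: w => [|[a b] w /= ->]. Qed.

Lemma JJinvK (A : nuAlg K) : cancel (@JJinv K A) (@JJ K A).
Proof. by move=> w; rewrite JJE JJinvE. Qed.

Lemma JJ_tscale (A : nuAlg K) (k : K) (l : seq (A * A)%type) :
  JJ (tscale k l) = tscale k (JJ l).
Proof. by rewrite !JJE. Qed.

Lemma mcop_op (d : mbdata K) : mcop (opData d) = mcop d.
Proof.
by do 4!apply: functional_extensionality => ?; rewrite /= JJinvE.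
Qed.

Lemma idempotent_op (A : nuAlg K) : idempotent_alg A -> idempotent_alg (opAlg A).
Proof.
move=> idemA a; have [l [Hl ->]] := idemA a.
by exists l; split=> // p /Hl [x [y ->]]; exists y, x.
Qed.

Lemma inML_op (A : nuAlg K) (T : A -> A) : inML T -> @inMR K (opAlg A) T.
Proof. by case=> [[linT mulT] multT]; do ![split] => // a b; apply: mulT. Qed.

Lemma inMR_op (A : nuAlg K) (T : A -> A) : inMR T -> @inML K (opAlg A) T.
Proof. by case=> [[linT mulT] multT]; do ![split] => // a b; apply: mulT. Qed.

Lemma opDataK : involutive (@opData K).
Proof.
case=> [[V mul mulA mulDl mulDr] B s t D]; rewrite /opData /opAlg /opJ /opJinv /=.
(* opAlg (opAlg A) differs from A only in its proof fields. *)
match goal with |- @MBData _ (@NuAlg _ _ _ ?pA ?pDl ?pDr) _ _ _ _ = _ =>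
  rewrite (proof_irrelevance _ pA mulA) (proof_irrelevance _ pDl mulDl)
          (proof_irrelevance _ pDr mulDr) end.
have -> : (fun a b c w => D a b c (JJinv (JJinv w))) = D.
  by do 4!apply: functional_extensionality => ?; rewrite !JJinvE.
by [].
Qed.

Lemma Dapp_opAlg (A : nuAlg K) E D (a : A) (w v : seq (A * A)%type) :
  @Dapp K (opAlg A) E D a w v <-> @Dapp K A E D a w v.
Proof.
elim: w v => [|p w IHw] v //=.
by split=> -[w1 [w2 [Dw1 [Dw2 Ew]]]]; exists w1, w2; do !split => //; apply/IHw.
Qed.

Lemma opData_isRMBA (d : mbdata K) : isLMBAd d -> isRMBAd (opData d).
Proof.
case=> ? idemA ? ? ? ? sM tM stC ? ? ? ? ? ? ? ? ? ? ? Dmul ? ? Dmod ?.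
rewrite /isRMBAd mcop_op; constructor => //=.
- exact: idempotent_op idemA.
- by move=> x; apply: inML_op (tM x).
- by move=> x; apply: inML_op (sM x).
- by move=> x y a; rewrite stC.
- by move=> a a' b c w v Dw /Dapp_opAlg; apply: Dmul.
- move=> y x y' x' a c1 c2 b c w c1E c2E.
  by apply: Dmod => e; [exact/esym/c1E | exact/esym/c2E].
Qed.

Lemma opData_isLMBA (d : mbdata K) : isRMBAd d -> isLMBAd (opData d).
Proof.
case=> ? idemA ? ? ? ? sM tM stC ? ? ? ? ? ? ? ? ? ? ? Dmul ? ? Dmod ?.
rewrite /isLMBAd mcop_op; constructor => //=.
- exact: idempotent_op idemA.
- by move=> x; apply: inMR_op (tM x).
- by move=> x; apply: inMR_op (sM x).
- by move=> x y a; rewrite stC.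
- by move=> a a' b c w v Dw /Dapp_opAlg; apply: Dmul.
- move=> x y x' y' a c1 c2 b c w c1E c2E.
  by apply: Dmod => e; [exact/esym/c1E | exact/esym/c2E].
Qed.

Lemma eqQ_opData (d : mbdata K) (l1 l2 : seq (mA d * mA d)%type) :
  eqQ (msrc d) (mtgt d) l1 l2 <->
  eqQ (mtgt (opData d)) (msrc (opData d)) (JJ l1) (JJ l2).
Proof. by rewrite !JJE. Qed.

Lemma lamT_opData (d : mbdata K) (a b : mA d) (w : seq (mA d * mA d)%type) :
  lamT (mcop (opData d)) (opJ a) (opJ b) (JJ w) <-> Tlam (mcop d) a b w.
Proof. by rewrite mcop_op JJE. Qed.

Lemma rhoT_opData (d : mbdata K) (a b : mA d) (w : seq (mA d * mA d)%type) :
  rhoT (mcop (opData d)) (opJ a) (opJ b) (JJ w) <-> Trho (mcop d) a b w.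
Proof. by rewrite mcop_op JJE. Qed.

End Opposite.

Theorem proposition4p2 (R : realType) :
  (forall d : mbdata R[i], isLMBAd d ->
    [/\ (* J (x) J induces a linear isomorphism
           _B A (x) A^B  ~=  ^B(A^op) (x) (A^op)_B *)
        (forall l1 l2 : seq (mA d * mA d)%type, eqQ (msrc d) (mtgt d) l1 l2 <->
           eqQ (mtgt (opData d)) (msrc (opData d)) (JJ l1) (JJ l2))
        /\ (forall l', exists l : seq (mA d * mA d)%type,
              eqQ (mtgt (opData d)) (msrc (opData d)) (JJ l) l')
        /\ (forall l1 l2 : seq (mA d * mA d)%type, JJ (l1 ++ l2) = JJ l1 ++ JJ l2)
        /\ (forall (k : R[i]) (l : seq (mA d * mA d)%type), JJ (tscale k l) = tscale k (JJ l)),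
        (* A^op is a right multiplier bialgebroid *)
        isRMBAd (opData d),
        (* its associated maps *)
        (forall (a b : mA d) w,
           lamT (mcop (opData d)) (opJ a) (opJ b) (JJ w) <->
           Tlam (mcop d) a b w) &
        (forall (a b : mA d) w,
           rhoT (mcop (opData d)) (opJ a) (opJ b) (JJ w) <->
           Trho (mcop d) a b w)])
  /\
  (forall d' : mbdata R[i], isRMBAd d' ->
     exists! d : mbdata R[i], isLMBAd d /\ opData d = d').
Proof.
split=> [d lmbaD | d' rmbaD'].
- split; [|exact: opData_isRMBA | exact: lamT_opData | exact: rhoT_opData].
  split; [exact: eqQ_opData | split; [|split]].
  + by move=> l'; exists (JJinv l'); rewrite JJinvK.
  + exact: map_cat.
  + exact: JJ_tscale.
- exists (opData d'); split=> [|d [_ <-]]; last by rewrite opDataK.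
  by split; [exact: opData_isLMBA | exact: opDataK].
Qed.
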